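(* Let $n\ge 3$ be an integer and let $C_n$ be the cycle with $n$ vertices. Then \[ \Theta(C_n)=\begin{cases} 1 & \text{if } n=3,\\ 2 & \text{if } n=4,\\ 4 & \text{if } n\ge 5.\end{cases}\]
   Context: All graphs are finite and simple. Let $k$ be a positive integer. A graph $G=(V,E)$ is a $k$-threshold graph with thresholds $\theta_1<\theta_2<\dots<\theta_k$ (real numbers) if there is a map $r:V\to\mathbb{R}$ such that for all distinct $u,v\in V$: $uv\in E$ if and only if the inequality $\theta_i\le r(u)+r(v)$ holds for an odd number of indices $i\in\{1,\dots,k\}$. Such a map $r$ is called a $(\theta_1,\dots,\theta_k)$-representation of $G$. The threshold number $\Theta(G)$ is the smallest positive integer $k$ such that $G$ is a $k$-threshold graph (for some choice of thresholds $\theta_1<\dots<\theta_k$). *)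

From mathcomp Require Import all_boot all_order all_algebra.
From mathcomp Require Import Rstruct.
From Stdlib Require Import Rdefinitions.
Set Implicit Arguments. Unset Strict Implicit. Unset Printing Implicit Defensive.
Import Order.TTheory GRing.Theory Num.Theory.
Local Open Scope ring_scope.

Definition simple_graph (V : finType) (adj : rel V) : Prop :=
  symmetric adj /\ irreflexive adj.

Definition cycle_adj (n : nat) : rel 'I_n :=
  fun i j => [&& i != j & [|| nat_of_ord j == modn (nat_of_ord i).+1 n | nat_of_ord i == modn (nat_of_ord j).+1 n]].

Definition strictly_increasing (k : nat) (theta : nat -> R) : Prop :=
  forall i j : nat, ltn i j -> ltn j k -> theta i < theta j.

Definition is_representation (V : finType) (adj : rel V) (k : nat)
    (theta : nat -> R) (r : V -> R) : Prop :=
  forall u v : V, u != v ->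
    adj u v = odd #|[set i : 'I_k | theta i <= r u + r v]|.

Definition is_k_threshold (V : finType) (adj : rel V) (k : nat) : Prop :=
  exists theta : nat -> R, strictly_increasing k theta /\
    exists r : V -> R, is_representation adj k theta r.

Definition threshold_number_is (V : finType) (adj : rel V) (t : nat) : Prop :=
  ltn 0 t /\ is_k_threshold adj t /\
  forall k : nat, ltn 0 k -> is_k_threshold adj k -> leq t k.

(* One threshold is refuted by
   the edges {0,1}, {2,3} and the non-edges {0,2}, {1,3}.  For n >= 5 only
   the facts that C_n is 2-regular, triangle-free and square-free are used.

   With thresholds t1 < t2 the edges are the pairs whose weight sum lies in
   [t1, t2).  Every vertex has a neighbour, so a non-neighbour of a heaviest
   vertex x has sum at least t2 with x and is heavier than both neighbours of
   x; dually for a lightest vertex m.  Hence x ~ m, the second neighbours x'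
   of x and m' of m are the lightest and heaviest of the other vertices, and
   the second neighbour of m' either closes the square x m m' x' or has a
   smaller sum with m' than the non-neighbour x'.

   With thresholds t1 < t2 < t3, an edge with sum at least t3 contains x, or
   x would close a triangle with it.  If both edges at x stay below t2, no
   sum reaches t3 and the previous case applies; otherwise the neighbours of
   x single out a lightest vertex whose non-neighbours other than x all have
   sum below t1 with it, which an edge or a square contradicts. *)

(* Loaded before ssrnat so that %N still denotes nat_scope afterwards. *)
From mathcomp Require Import lra zify.
From Stdlib Require Import Rdefinitions.
From mathcomp Require Import all_boot all_order all_algebra.
From mathcomp Require Import Rstruct.
Set Implicit Arguments. Unset Strict Implicit. Unset Printing Implicit Defensive.
Import Order.TTheory GRing.Theory Num.Theory.
Local Open Scope ring_scope.

Lemma card_set_sum k (P : pred 'I_k) :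
  #|[set i | P i]| = (\sum_(i < k) nat_of_bool (P i))%N.
Proof. by rewrite -sum1_card big_mkcond /=; apply: eq_bigr => i _; rewrite inE; case: (P i). Qed.

Lemma threshold_parity1 (t : nat -> R) s :
  odd #|[set i : 'I_1 | t i <= s]| = (t 0%N <= s).
Proof. by rewrite card_set_sum !big_ord_recr big_ord0 /=; case: (t 0%N <= s). Qed.

Lemma threshold_parity2 (t : nat -> R) s : t 0%N < t 1%N ->
  odd #|[set i : 'I_2 | t i <= s]| = (t 0%N <= s) && (s < t 1%N).
Proof.
move=> t01; rewrite card_set_sum !big_ord_recr big_ord0 /=.
by case: (lerP (t 0%N) s); case: (lerP (t 1%N) s) => //= *; lra.
Qed.

Lemma threshold_parity3 (t : nat -> R) s : t 0%N < t 1%N -> t 1%N < t 2%N ->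
  odd #|[set i : 'I_3 | t i <= s]| = (t 0%N <= s) && (s < t 1%N) || (t 2%N <= s).
Proof.
move=> t01 t12; rewrite card_set_sum !big_ord_recr big_ord0 /=.
by case: (lerP (t 0%N) s); case: (lerP (t 1%N) s); case: (lerP (t 2%N) s) => //= *; lra.
Qed.

Lemma threshold_parity4 (t : nat -> R) s :
  t 0%N < t 1%N -> t 1%N < t 2%N -> t 2%N < t 3%N ->
  odd #|[set i : 'I_4 | t i <= s]| =
    (t 0%N <= s) && (s < t 1%N) || (t 2%N <= s) && (s < t 3%N).
Proof.
move=> t01 t12 t23; rewrite card_set_sum !big_ord_recr big_ord0 /=.
by case: (lerP (t 0%N) s); case: (lerP (t 1%N) s); case: (lerP (t 2%N) s);
  case: (lerP (t 3%N) s) => //= *; lra.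
Qed.

Lemma threshold_number_isI (V : finType) (adj : rel V) (t : nat) : (0 < t)%N ->
  is_k_threshold adj t -> (forall k, (0 < k)%N -> (k < t)%N -> ~ is_k_threshold adj k) ->
  threshold_number_is adj t.
Proof.
move=> t_gt0 adj_t below_t; split=> //; split=> // k k_gt0 adj_k.
by rewrite leqNgt; apply/negP => /(below_t k k_gt0).
Qed.

Lemma not_threshold1_of_2K2 (V : finType) (adj : rel V) (a b c d : V) :
  a != b -> c != d -> a != c -> b != d ->
  adj a b -> adj c d -> ~~ adj a c -> ~~ adj b d -> ~ is_k_threshold adj 1.
Proof.
move=> ab cd ac bd + + + + [t [_ [r rep]]].
rewrite (rep a b) // (rep c d) // (rep a c) // (rep b d) // !threshold_parity1 -!ltNge.
lra.
Qed.

Record two_regular_girth5 (V : finType) (adj : rel V) : Prop := {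
  sym_adj : symmetric adj;
  irr_adj : irreflexive adj;
  two_nbrs : forall u, exists a b, [/\ a != b, adj u a, adj u b &
                     forall w, adj u w -> w = a \/ w = b];
  triangle_free : forall a b c, adj a b -> adj b c -> adj c a -> False;
  square_free : forall a b c d, a != c -> b != d ->
                  adj a b -> adj b c -> adj c d -> adj d a -> False }.

Section Girth5.
Variables (V : finType) (adj : rel V).
Hypothesis G : two_regular_girth5 adj.

Lemma adj_neq u v : adj u v -> u != v.
Proof. by apply: contraTneq => ->; rewrite (irr_adj G). Qed.

Lemma adj_sym u v : adj u v -> adj v u.
Proof. by rewrite (sym_adj G). Qed.

Lemma not_adj_of_nbrs u a b w : (forall w, adj u w -> w = a \/ w = b) ->
  w != a -> w != b -> ~~ adj u w.
Proof. by move=> nbrs wa wb; apply/negP => /nbrs [] e; [move: wa | move: wb]; rewrite e eqxx. Qed.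

Lemma exists_nbr_neq u z : exists2 w, adj u w & w != z.
Proof.
have [a [b [ab ua ub _]]] := two_nbrs G u.
by case: (eqVneq a z) => [<-|]; [exists b; rewrite // eq_sym | exists a].
Qed.

Lemma other_nbr u v : adj u v ->
  exists v', [/\ v' != v, adj u v' & forall w, adj u w -> w = v \/ w = v'].
Proof.
move=> uv; have [a [b [ab ua ub nbrs]]] := two_nbrs G u.
case: (nbrs v uv) => ->; first by exists b; rewrite eq_sym.
by exists a; split => // w /nbrs [] ->; [right | left].
Qed.

Lemma exists_non_nbr u : exists2 w, u != w & ~~ adj u w.
Proof.
have [a [b [ab ua ub nbrs]]] := two_nbrs G u.
have [c [cu ac nbrs_a]] := other_nbr (adj_sym ua).
exists c; first by rewrite eq_sym.
apply: not_adj_of_nbrs nbrs _ _; first by rewrite eq_sym (adj_neq ac).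
apply/eqP => cb; apply: (triangle_free G ua _ (adj_sym ub)).
by rewrite -cb.
Qed.

Section TwoThresholds.
Variables (r : V -> R) (t1 t2 : R).
Hypothesis rep : forall u v, u != v -> adj u v = (t1 <= r u + r v) && (r u + r v < t2).

Lemma adj_window u v : adj u v -> t1 <= r u + r v /\ r u + r v < t2.
Proof. by move=> uv; move: (rep (adj_neq uv)); rewrite uv => /esym/andP. Qed.

Lemma non_adj_outside u v : u != v -> ~~ adj u v -> r u + r v < t1 \/ t2 <= r u + r v.
Proof. by move=> uv; rewrite rep // negb_and -ltNge -leNgt => /orP. Qed.

Lemma non_adj_above z y w :
  z != y -> ~~ adj z y -> adj y w -> r w <= r z -> t2 <= r z + r y.
Proof.
move=> zy nzy yw wz; have [t1_le _] := adj_window yw.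
by case: (non_adj_outside zy nzy) => ?; lra.
Qed.

Lemma non_adj_below z y w :
  z != y -> ~~ adj z y -> adj y w -> r z <= r w -> r z + r y < t1.
Proof.
move=> zy nzy yw zw; have [_ lt_t2] := adj_window yw.
by case: (non_adj_outside zy nzy) => ?; lra.
Qed.

Variables (x m : V).
Hypotheses (x_max : forall y, r y <= r x) (m_min : forall y, r m <= r y).

Lemma nbr_of_max_lt a u : adj x a -> x != u -> ~~ adj x u -> r a < r u.
Proof.
move=> xa xu nxu; have [w uw _] := exists_nbr_neq u u.
have := non_adj_above xu nxu uw (x_max w); have [_ ?] := adj_window xa; lra.
Qed.

Lemma non_nbr_of_min_lt a u : adj m a -> m != u -> ~~ adj m u -> r u < r a.
Proof.
move=> ma mu nmu; have [w uw _] := exists_nbr_neq u u.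
have := non_adj_below mu nmu uw (m_min w); have [? _] := adj_window ma; lra.
Qed.

Lemma max_adj_min : adj x m.
Proof.
apply: contraT => nxm; have [a [_ [_ xa _ _]]] := two_nbrs G x.
have [w xw nxw] := exists_non_nbr x.
have [exm|xm] := eqVneq x m.
  by have := nbr_of_max_lt xa xw nxw; have := m_min a; have := x_max w; rewrite -exm; lra.
by have := nbr_of_max_lt xa xm nxm; have := m_min a; lra.
Qed.

Lemma two_thresholds_absurd : False.
Proof.
have xm := max_adj_min.
have [x' [x'm xx' nbrs_x]] := other_nbr xm.
have [m' [m'x mm' nbrs_m]] := other_nbr (adj_sym xm).
have m'x' : m' != x'.
  by apply/eqP => e; apply: (triangle_free G xm _ (adj_sym xx')); rewrite -e.
have nxm' : ~~ adj x m'.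
  by apply: not_adj_of_nbrs nbrs_x _ m'x'; rewrite eq_sym (adj_neq mm').
have x'_lt u : u != x -> u != m -> u != x' -> r x' < r u.
  move=> ux um ux'; apply: nbr_of_max_lt xx' _ (not_adj_of_nbrs nbrs_x um ux').
  by rewrite eq_sym.
have lt_m' u : u != m -> u != x -> u != m' -> r u < r m'.
  move=> um ux um'; apply: non_nbr_of_min_lt mm' _ (not_adj_of_nbrs nbrs_m ux um').
  by rewrite eq_sym.
have [z [zm m'z nbrs_m']] := other_nbr (adj_sym mm').
have zx : z != x by apply: contraNneq nxm' => <-; apply: adj_sym.
have [ezx'|zx'] := eqVneq z x'.
  apply: (square_free G _ _ xm mm' _ (adj_sym xx')); rewrite -?ezx' //.
  - by rewrite eq_sym.
  - by rewrite eq_sym.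
have nm'x' : ~~ adj m' x' by apply: not_adj_of_nbrs nbrs_m' _ _; rewrite // eq_sym.
have [w x'w wx] := exists_nbr_neq x' x.
have w_le : r w <= r m'.
  have [->|wm] := eqVneq w m; first exact: m_min.
  apply/ltW/lt_m' => //.
  by apply: contraNneq nm'x' => <-; apply: adj_sym.
have := non_adj_above m'x' nm'x' x'w w_le; have := x'_lt z zx zm zx'.
have [_ ?] := adj_window m'z; lra.
Qed.

End TwoThresholds.

Lemma no_two_threshold_rep (v0 : V) (r : V -> R) (t1 t2 : R) :
  (forall u v, u != v -> adj u v = (t1 <= r u + r v) && (r u + r v < t2)) -> False.
Proof.
move=> rep; have [x _ x_max] := @arg_maxP _ _ V v0 xpredT r isT.
have [m _ m_min] := @arg_minP _ _ V v0 xpredT r isT.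
exact: (two_thresholds_absurd rep (fun y => x_max y isT) (fun y => m_min y isT)).
Qed.

Section ThreeThresholds.
Variables (r : V -> R) (t1 t2 t3 : R).
Hypotheses (t12 : t1 < t2) (t23 : t2 < t3).
Hypothesis rep : forall u v, u != v ->
  adj u v = (t1 <= r u + r v) && (r u + r v < t2) || (t3 <= r u + r v).
Variable x : V.
Hypothesis x_max : forall y, r y <= r x.

Lemma adj_windows u v : adj u v ->
  t1 <= r u + r v /\ r u + r v < t2 \/ t3 <= r u + r v.
Proof. by move=> uv; move: (rep (adj_neq uv)); rewrite uv => /esym/orP[/andP|]; auto. Qed.

Lemma adj_sum_ge u v : adj u v -> t1 <= r u + r v.
Proof. by move/adj_windows; move: t12 t23; lra. Qed.

Lemma non_adj_gaps u v : u != v -> ~~ adj u v ->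
  r u + r v < t1 \/ t2 <= r u + r v /\ r u + r v < t3.
Proof.
move=> uv; rewrite rep // negb_or negb_and -!ltNge -!leNgt.
by case/andP => /orP[] ? ?; [left | right].
Qed.

Lemma non_adj_middle z y w : z != y -> ~~ adj z y -> adj y w -> r w <= r z ->
  t2 <= r z + r y /\ r z + r y < t3.
Proof.
move=> zy nzy yw wz; case: (non_adj_gaps zy nzy) => [?|//].
by have := adj_sum_ge yw; lra.
Qed.

Lemma top_edge_at_max u v : adj u v -> t3 <= r u + r v -> u = x \/ v = x.
Proof.
move=> uv top; have [|ux] := eqVneq u x; first by left.
have [|vx] := eqVneq v x; first by right.
exfalso; apply: (triangle_free G uv (_ : adj v x) (_ : adj x u)).
  by rewrite rep //; apply/orP; right; have := x_max u; lra.
by rewrite rep; [apply/orP; right; have := x_max v; lra | rewrite eq_sym].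
Qed.

Lemma max_non_nbr_middle u : x != u -> ~~ adj x u ->
  t2 <= r x + r u /\ r x + r u < t3.
Proof.
move=> xu nxu; have [w uw _] := exists_nbr_neq u u.
exact: non_adj_middle xu nxu uw (x_max w).
Qed.

Lemma non_nbr_of_min_low v y : (forall w, r v <= r w) ->
  v != y -> y != x -> ~~ adj v y -> r v + r y < t1.
Proof.
move=> v_min vy yx nvy; case: (non_adj_gaps vy nvy) => // [[mid _]]; exfalso.
have [w yw wx] := exists_nbr_neq y x.
case: (adj_windows yw) => [[_ ?]|top]; first by have := v_min w; lra.
by case: (top_edge_at_max yw top) => /eqP; rewrite ?(negbTE yx) ?(negbTE wx).
Qed.

Variables a b : V.
Hypotheses (ab : a != b) (xa : adj x a) (xb : adj x b).
Hypothesis nbrs_x : forall w, adj x w -> w = a \/ w = b.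

Lemma sums_lt_t3 : r x + r a < t3 -> r x + r b < t3 ->
  forall u v, u != v -> r u + r v < t3.
Proof.
move=> xa3 xb3.
have at_x v : x != v -> r x + r v < t3.
  move=> xv; have [xv_adj|nxv] := boolP (adj x v); first by case: (nbrs_x xv_adj) => ->.
  by case: (max_non_nbr_middle xv nxv) => _.
move=> u v; have [->|ux] := eqVneq u x; first exact: at_x.
have [-> xu|vx uv] := eqVneq v x; first by rewrite addrC at_x // eq_sym.
rewrite ltNge; apply/negP => top.
have uv_adj : adj u v by rewrite rep // top orbT.
by case: (top_edge_at_max uv_adj top) => /eqP; rewrite ?(negbTE ux) ?(negbTE vx).
Qed.

Lemma other_vertex_middle w : w != x -> w != a -> w != b ->
  t2 <= r x + r w /\ r x + r w < t3.
Proof.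
move=> wx wa wb; apply: max_non_nbr_middle (not_adj_of_nbrs nbrs_x wa wb).
by rewrite eq_sym.
Qed.

Lemma high_low_absurd : t3 <= r x + r a -> r x + r b < t2 -> False.
Proof.
move=> xa3 xb2.
have b_min w : r b <= r w.
  have [->|wb] := eqVneq w b; first by [].
  have [->|wa] := eqVneq w a; first by move: t23; lra.
  have [->|wx] := eqVneq w x; first exact: x_max.
  by have := other_vertex_middle wx wa wb; lra.
have [c [cx bc nbrs_b]] := other_nbr (adj_sym xb).
have ac : a != c.
  by apply/eqP => e; apply: (triangle_free G xa (_ : adj a b) (adj_sym xb)); rewrite e adj_sym.
have ax : a != x by rewrite eq_sym (adj_neq xa).
have ba : b != a by rewrite eq_sym.
have [ca cb] : c != a /\ c != b by rewrite eq_sym ac eq_sym (adj_neq bc).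
have := non_nbr_of_min_low b_min ba ax (not_adj_of_nbrs nbrs_b ax ac).
by have := adj_sum_ge bc; have := other_vertex_middle cx ca cb; lra.
Qed.

Section HighHigh.
Hypotheses (xb3 : t3 <= r x + r b) (ba_le : r b <= r a).
Variable d : V.
Hypotheses (dx : d != x) (ad : adj a d) (nbrs_a : forall w, adj a w -> w = x \/ w = d).

Lemma high_high_other_nbr_min w : r d <= r w.
Proof.
have lt_b y : y != x -> y != a -> y != b -> r y < r b.
  by move=> yx ya yb; have := other_vertex_middle yx ya yb; move: xb3; lra.
have bd : b != d.
  by apply/eqP => e; apply: (triangle_free G xa (_ : adj a b) (adj_sym xb)); rewrite e.
have [ax bx] : a != x /\ b != x by rewrite !(eq_sym _ x) (adj_neq xa) (adj_neq xb).
have ad_low : r a + r d < t2.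
  case: (adj_windows ad) => [[_ //]|top].
  by case: (top_edge_at_max ad top) => /eqP; rewrite ?(negbTE ax) ?(negbTE dx).
have a_non_nbr y : a != y -> ~~ adj a y -> t2 <= r a + r y.
  move=> ay nay; have [u yu ux] := exists_nbr_neq y x.
  have ua : u != a by apply: contraNneq nay => <-; apply: adj_sym.
  have u_le : r u <= r a.
    have [->|ub] := eqVneq u b; first by [].
    by have := lt_b u ux ua ub; move: ba_le; lra.
  by case: (non_adj_middle ay nay yu u_le).
have d_lt_b : r d < r b by have := a_non_nbr b ab (not_adj_of_nbrs nbrs_a bx bd); lra.
have [->|wd] := eqVneq w d; first by [].
have [->|wa] := eqVneq w a; first by move: ba_le; lra.
have [->|wx] := eqVneq w x; first by have := x_max b; lra.
have aw : a != w by rewrite eq_sym.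
by have := a_non_nbr w aw (not_adj_of_nbrs nbrs_a wx wd); lra.
Qed.

End HighHigh.

Lemma high_high_absurd : t3 <= r x + r b -> r b <= r a -> False.
Proof.
move=> xb3 ba_le; have [d [dx ad nbrs_a]] := other_nbr (adj_sym xa).
have d_min := high_high_other_nbr_min xb3 ba_le dx ad nbrs_a.
have nxd : ~~ adj x d.
  apply: (not_adj_of_nbrs nbrs_x); first by rewrite eq_sym (adj_neq ad).
  by apply/eqP => e; apply: (triangle_free G xa (_ : adj a b) (adj_sym xb)); rewrite -e.
have [e [ea de nbrs_d]] := other_nbr (adj_sym ad).
have ex : e != x by apply: contraNneq nxd => <-; apply: adj_sym.
have [be|be] := eqVneq b e.
  apply: (square_free G (_ : x != d) ab xa ad _ (adj_sym xb)); last by rewrite be.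
  by rewrite eq_sym.
have db : d != b by apply: contraNneq nxd => ->.
have bx : b != x by rewrite eq_sym (adj_neq xb).
have [ba eb] : b != a /\ e != b by split; rewrite eq_sym.
have := non_nbr_of_min_low d_min db bx (not_adj_of_nbrs nbrs_d ba be).
by have := other_vertex_middle ex ea eb; have := adj_sum_ge de; lra.
Qed.

End ThreeThresholds.

Lemma no_three_threshold_rep (v0 : V) (r : V -> R) (t1 t2 t3 : R) :
  t1 < t2 -> t2 < t3 ->
  (forall u v, u != v ->
     adj u v = (t1 <= r u + r v) && (r u + r v < t2) || (t3 <= r u + r v)) -> False.
Proof.
move=> t12 t23 rep; have [x _ x_max'] := @arg_maxP _ _ V v0 xpredT r isT.
have x_max y : r y <= r x := x_max' y isT.
have [a [b [ab xa xb nbrs_x]]] := two_nbrs G x.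
have ba : b != a by rewrite eq_sym.
have nbrs_x' w : adj x w -> w = b \/ w = a by case/nbrs_x; [right | left].
case: (adj_windows rep xa) => [[_ xa2]|xa3];
  case: (adj_windows rep xb) => [[_ xb2]|xb3].
- apply: (no_two_threshold_rep x (t1 := t1) (t2 := t2)) => u v uv.
  have uv3 : r u + r v < t3 by apply: (sums_lt_t3 t12 t23 rep x_max nbrs_x) => //; lra.
  by rewrite rep // [t3 <= _]leNgt uv3 orbF.
- exact: (high_low_absurd t12 t23 rep x_max ba xb xa nbrs_x' xb3 xa2).
- exact: (high_low_absurd t12 t23 rep x_max ab xa xb nbrs_x xa3 xb2).
- have [ba_le|ab_lt] := lerP (r b) (r a).
    exact: (high_high_absurd t12 t23 rep x_max ab xa xb nbrs_x xb3 ba_le).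
  exact: (high_high_absurd t12 t23 rep x_max ba xb xa nbrs_x' xa3 (ltW ab_lt)).
Qed.

End Girth5.

Lemma girth5_not_threshold2 (V : finType) (adj : rel V) (v0 : V) :
  two_regular_girth5 adj -> ~ is_k_threshold adj 2.
Proof.
move=> G [t [t_incr [r rep]]].
apply: (no_two_threshold_rep G v0 (r := r) (t1 := t 0%N) (t2 := t 1%N)) => u v uv.
by rewrite rep // threshold_parity2 //; apply: t_incr.
Qed.

Lemma girth5_not_threshold3 (V : finType) (adj : rel V) (v0 : V) :
  two_regular_girth5 adj -> ~ is_k_threshold adj 3.
Proof.
move=> G [t [t_incr [r rep]]].
have t01 : t 0%N < t 1%N by apply: t_incr.
have t12 : t 1%N < t 2%N by apply: t_incr.
apply: (no_three_threshold_rep G v0 t01 t12) => u v uv.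
by rewrite rep // threshold_parity3.
Qed.

Local Close Scope ring_scope.

Lemma cycle_adjE n (i j : 'I_n) : cycle_adj i j =
  (i != j :> nat) && [|| j == i.+1 :> nat, i == j.+1 :> nat,
     (i == n.-1 :> nat) && (j == 0 :> nat) | (j == n.-1 :> nat) && (i == 0 :> nat)].
Proof.
rewrite /cycle_adj -val_eqE /=.
have mS k : (k < n) -> (k.+1 %% n = if k.+1 == n then 0 else k.+1).
  by move=> k_lt; case: eqP => [->|?]; [exact: modnn | apply: modn_small; lia].
have [ilt jlt] := (ltn_ord i, ltn_ord j).
by rewrite !mS //; case: ifP => ?; case: ifP => ?; lia.
Qed.

Lemma val_iter_ordS n (u : 'I_n) k : iter k (@ordS n) u = (u + k) %% n :> nat.
Proof.
elim: k => [|k IH]; first by rewrite addn0 modn_small.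
by rewrite iterS /= IH -addn1 modnDml -addnA addn1.
Qed.

Lemma iter_ordS_neq n (u : 'I_n) k : 0 < k < n -> iter k (@ordS n) u != u.
Proof.
case/andP=> k_gt0 k_lt; rewrite -val_eqE /= val_iter_ordS.
rewrite -[X in _ != X](modn_small (ltn_ord u)) -[X in _ != X %% n]addn0.
by rewrite eqn_modDl mod0n modn_small // -lt0n.
Qed.

Lemma cycle_adj_nbrs n (u v : 'I_n) : 3 <= n ->
  cycle_adj u v = (v == ordS u) || (v == ord_pred u).
Proof.
move=> n3; have ordSE (i j : 'I_n) : (j == i.+1 %% n :> nat) = (j == ordS i) by [].
rewrite /cycle_adj !ordSE -[u in u == ordS v](ord_predK u) (inj_eq (@ordS_inj n)).
have S_neq (i : 'I_n) : ordS i != i by apply: (@iter_ordS_neq n i 1); lia.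
rewrite (eq_sym (ord_pred u)); have [->|_] := eqVneq v (ordS u).
  by rewrite eq_sym S_neq.
have [->|_] := eqVneq v (ord_pred u); last by rewrite andbF.
by rewrite -{1}(ord_predK u) S_neq.
Qed.

Lemma cycle_adj_ordS_pred n (u : 'I_n) : 4 <= n -> ~~ cycle_adj (ordS u) (ord_pred u).
Proof.
move=> n4; rewrite cycle_adj_nbrs ?ordSK; last by lia.
rewrite -[ord_pred u == _](inj_eq (@ordS_inj n)) -[ord_pred u == u](inj_eq (@ordS_inj n)).
have S3 : ordS (ordS (ordS u)) != u by apply: (@iter_ordS_neq n u 3); lia.
have S1 : ordS u != u by apply: (@iter_ordS_neq n u 1); lia.
by rewrite ord_predK !(eq_sym u) negb_or S3 S1.
Qed.

Lemma cycle_girth5 n : 5 <= n -> two_regular_girth5 (@cycle_adj n).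
Proof.
move=> n5; have n3 : 3 <= n by lia.
have sym : symmetric (@cycle_adj n) by move=> i j; rewrite /cycle_adj eq_sym orbC.
have irr : irreflexive (@cycle_adj n) by move=> i; rewrite /cycle_adj eqxx.
have nbrs (u v : 'I_n) : cycle_adj u v -> v = ordS u \/ v = ord_pred u.
  by rewrite cycle_adj_nbrs // => /orP[]/eqP; [left | right].
split=> //.
- move=> u; exists (ordS u), (ord_pred u); split=> //.
  + apply/eqP => /(congr1 (@ordS n)); rewrite ord_predK; apply/eqP.
    by apply: (@iter_ordS_neq n u 2); lia.
  + by rewrite cycle_adj_nbrs // eqxx.
  + by rewrite cycle_adj_nbrs // eqxx orbT.
  + exact: nbrs.
- move=> a b c ab bc ca.
  have Sa_Pa : ~~ cycle_adj (ordS a) (ord_pred a) by apply: cycle_adj_ordS_pred; lia.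
  move: bc; case: (nbrs _ _ ab) (nbrs _ _ (etrans (sym _ _) ca)) => -> [] ->;
    by rewrite ?irr // ?(negbTE Sa_Pa) // sym (negbTE Sa_Pa).
- move=> a b c d ac bd ab bc cd da.
  have iterS_neq k : 0 < k < 5 -> iter k (@ordS n) a != a.
    by move=> k_bounds; apply: iter_ordS_neq; lia.
  have common_nbr : cycle_adj (ordS a) c -> cycle_adj (ord_pred a) c -> False.
    case/nbrs => [->|ec]; last by rewrite ec ordSK eqxx in ac.
    case/nbrs => [|/(congr1 (@ordS n))/(congr1 (@ordS n))]; rewrite !ord_predK.
      by move/eqP; rewrite (negbTE (iterS_neq 2 isT)).
    by move/eqP; rewrite (negbTE (iterS_neq 4 isT)).
  have [ad dc] : cycle_adj a d /\ cycle_adj d c by split; rewrite sym.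
  by case: (nbrs _ _ ab) (nbrs _ _ ad) bd bc dc => -> [] ->;
    rewrite ?eqxx // => _ ? ?; apply: common_nbr.
Qed.

Lemma cycle_not_threshold1 n : 4 <= n -> ~ is_k_threshold (@cycle_adj n) 1.
Proof.
move=> n4; have lt k : k < 4 -> k < n by move=> ?; lia.
pose v k (k4 : k < 4) : 'I_n := Ordinal (lt k k4).
apply: (@not_threshold1_of_2K2 _ _ (v 0 isT) (v 1 isT) (v 2 isT) (v 3 isT));
  rewrite -?val_eqE ?cycle_adjE /=; lia.
Qed.

Local Open Scope ring_scope.

Lemma cycle3_threshold1 : is_k_threshold (@cycle_adj 3) 1.
Proof.
exists (fun _ => 0); split; first by move=> i j /= ij j1; lia.
exists (fun _ => 1) => u v uv; rewrite (@threshold_parity1 (fun _ => 0)) cycle_adjE.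
have -> : (0 <= 1 + 1 :> R) by lra.
by move: u v uv => [[|[|[|u]]] ?] [[|[|[|v]]] ?].
Qed.

Lemma cycle4_threshold2 : is_k_threshold (@cycle_adj 4) 2.
Proof.
have incr : strictly_increasing 2 (fun i => i.+1%:R : R).
  by move=> i j ij _; rewrite ltr_nat.
exists (fun i => i.+1%:R); split => //.
exists (fun i : 'I_4 => (odd i)%:R) => u v uv.
rewrite (@threshold_parity2 (fun i => i.+1%:R)) ?incr // -natrD ler_nat ltr_nat cycle_adjE.
by move: u v uv => [[|[|[|[|u]]]] ?] [[|[|[|[|v]]]] ?].
Qed.

(* Weights for the cycle on 0, ..., n: consecutive vertices i, i+1 have sum
   -2 or 2 (-1 or 3 when i+1 = n), inside the window [-2, 4) that all other
   pairs miss; the closing edge {0, n} has sum cycle_weight n n, which gets a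
   window of width 1 of its own, below or above everything else. *)
Definition cycle_weight (n i : nat) : int :=
  (if odd i then - (2 * i)%:Z else (2 * i)%:Z) + (if i == n then 1 else 0).

Definition cycle_thresholds (n i : nat) : int :=
  let w := cycle_weight n n in
  if odd n then match i with 0 => w | 1 => w + 1 | 2 => -2 | _ => 4 end
  else match i with 0 => -2 | 1 => 4 | 2 => w | _ => w + 1 end.

Lemma cycle_threshold4 n : (5 <= n)%N -> is_k_threshold (@cycle_adj n) 4.
Proof.
case: n => // n n5; pose t i : R := (cycle_thresholds n i)%:~R.
have wn : odd n /\ cycle_weight n n = - (2 * n)%:Z + 1 \/
          ~~ odd n /\ cycle_weight n n = (2 * n)%:Z + 1.
  by rewrite /cycle_weight eqxx; case: (odd n); [left | right].
have wE i : [\/ [/\ i != n, odd i & cycle_weight n i = - (2 * i)%:Z],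
                [/\ i != n, ~~ odd i & cycle_weight n i = (2 * i)%:Z],
                [/\ i = n, odd i & cycle_weight n i = - (2 * i)%:Z + 1] |
                [/\ i = n, ~~ odd i & cycle_weight n i = (2 * i)%:Z + 1]].
  rewrite /cycle_weight; case: eqP => [->|_]; case: ifP => _; rewrite ?addr0;
    by [apply: Or43 | apply: Or44 | apply: Or41 | apply: Or42].
have incr : strictly_increasing 4 t.
  move=> i j ij j4; rewrite ltr_int /cycle_thresholds.
  case: i ij => [|[|[|i]]] ij; case: j j4 ij => [|[|[|[|j]]]] //= j4 ij;
    case: (odd n) wn => wn; lia.
exists t; split => //; exists (fun i : 'I_n.+1 => (cycle_weight n i)%:~R) => u v uv.
rewrite threshold_parity4 ?incr // /t -!intrD !ler_int !ltr_int cycle_adjE.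
move: uv; rewrite -val_eqE /= => uv; have [ult vlt] := (ltn_ord u, ltn_ord v).
rewrite /cycle_thresholds /=; case: wn => -[n_odd ->]; rewrite ?n_odd ?(negbTE n_odd);
  by case: (wE u) => -[u1 u2 ->]; case: (wE v) => -[v1 v2 ->]; lia.
Qed.

Local Close Scope ring_scope.

Theorem theorem1 (n : nat) (hn : (3 <= n)%N) :
  threshold_number_is (@cycle_adj n)
    (if n == 3 then 1 else if n == 4 then 2 else 4)%N.
Proof.
have [->|n3] := eqVneq n 3.
  by apply: threshold_number_isI cycle3_threshold1 _ => // k k0 k1; lia.
have [->|n4] := eqVneq n 4.
  apply: threshold_number_isI cycle4_threshold2 _ => // [[|[|k]]] //= _ _.
  exact: cycle_not_threshold1.
have n5 : 5 <= n by lia.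
pose v0 : 'I_n := Ordinal (leq_trans (isT : 0 < 5) n5).
apply: threshold_number_isI (cycle_threshold4 n5) _ => // [[|[|[|[|k]]]]] // _ _.
- exact/cycle_not_threshold1/ltnW.
- exact: girth5_not_threshold2 v0 (cycle_girth5 n5).
- exact: girth5_not_threshold3 v0 (cycle_girth5 n5).
Qed.
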